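(* Let $k=\mathbb{F}_q$, $(Q,W)$ a QP with a cut $C$, $\alpha\in\mathbb{Z}_{\ge0}^{Q_0}$ and $\mu$ a slope function such that $(\alpha,\mu)$ is numb to $C$. Then $$|\varphi_\omega(\mathrm{Rep}^\mu_\alpha(Q))|=q^{\langle\alpha,\alpha\rangle_C}\,|\mathrm{Rep}^\mu_\alpha(J(Q,W;C))|,$$ and consequently $$\frac{|\varphi_\omega(\mathrm{Rep}^\mu_\alpha(Q))|_{\mathrm{vir}}}{|\mathrm{GL}_\alpha|_{\mathrm{vir}}}=q^{\frac12\langle\alpha,\alpha\rangle_{J_C}}\frac{|\mathrm{Rep}^\mu_\alpha(J(Q,W;C))|}{|\mathrm{GL}_\alpha|}.$$
   Context: $Q$ finite quiver, $W$ a potential, $\omega:\mathrm{Rep}_\alpha(Q)\to k$, $M\mapsto\operatorname{tr}W(M)$. A cut is $C\subset Q_1$ with $W$ homogeneous of degree $1$ when arrows of $C$ have degree $1$ and others degree $0$; $Q_C=(Q_0,Q_1\setminus C)$ and $J(Q,W;C)=\widehat{kQ_C}/\langle\partial_cW:c\in C\rangle$ ($\partial_c$ cyclic derivative). A slope function is $\mu=\sigma/\theta$ with $\sigma,\theta$ integral linear forms on $\mathbb{Z}^{Q_0}$ and $\theta(\gamma)>0$ for $\gamma\ne0$; $M$ is $\mu$-semistable if $\mu(\underline{\dim}L)\le\mu(\underline{\dim}M)$ for all nonzero subrepresentations $L$. $\mathrm{Rep}^\mu_\alpha(-)$ denotes the $\mu$-semistable locus. $(\alpha,\mu)$ is numb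 to $C$ if the vector bundle (forgetting arrows in $C$) $\pi:\mathrm{Rep}_\alpha(Q)\to\mathrm{Rep}_\alpha(Q_C)$ restricts to a bundle $\mathrm{Rep}^\mu_\alpha(Q)\to\mathrm{Rep}^\mu_\alpha(Q_C)$, i.e. $\mathrm{Rep}^\mu_\alpha(Q)=\pi^{-1}(\mathrm{Rep}^\mu_\alpha(Q_C))$. $|\varphi_\omega(X)|=|\omega^{-1}(0)|-|\omega^{-1}(1)|$ (numbers of $\mathbb{F}_q$-points), $|X|_{\mathrm{vir}}$-type quantities: $|\varphi_\omega(X)|_{\mathrm{vir}}=q^{-\dim X/2}|\varphi_\omega(X)|$, $|\mathrm{GL}_\alpha|_{\mathrm{vir}}=q^{-\dim\mathrm{GL}_\alpha/2}|\mathrm{GL}_\alpha(\mathbb{F}_q)|$, $\mathrm{GL}_\alpha=\prod_i\mathrm{GL}_{\alpha_i}$. $\langle\alpha,\beta\rangle_Q=\sum_i\alpha_i\beta_i-\sum_{a\in Q_1}\alpha_{ta}\beta_{ha}$, $\langle\alpha,\beta\rangle_C=\sum_{c\in C}\alpha_{tc}\beta_{hc}$, $\langle\alpha,\beta\rangle_{J_C}=\langle\alpha,\beta\rangle_Q+\langle\alpha,\beta\rangle_C+\langle\beta,\alpha\rangle_C$. *)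

From HB Require Import structures.
From mathcomp Require Import all_boot all_order all_algebra.
Set Implicit Arguments. Unset Strict Implicit. Unset Printing Implicit Defensive.
Import Order.TTheory GRing.Theory Num.Theory.
Local Open Scope ring_scope.

Record quiver := Quiver { Q0 : finType; Q1 : finType; tl : Q1 -> Q0; hd : Q1 -> Q0 }.

Definition cutQ (Q : quiver) (C : {set Q1 Q}) : quiver :=
  @Quiver (Q0 Q) {a : Q1 Q | a \notin C} (fun a => tl (val a)) (fun a => hd (val a)).

Section Reps.
Variable F : finFieldType.
Variable Q : quiver.
Variable alpha : Q0 Q -> nat.

(* Rep_alpha(Q): a matrix M_a : k^{alpha(ta)} -> k^{alpha(ha)} per arrow
   (row-vector convention: v |-> v *m M_a). *)
Definition rep := {dffun forall a : Q1 Q, 'M[F]_(alpha (tl a), alpha (hd a))}.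

(* Total space V = (+)_i k^{alpha_i}, indexed by pairs (i, p), p < alpha_i. *)
Definition vidx := {i : Q0 Q & 'I_(alpha i)}.
Definition totdim := #|{: vidx}|.

Definition mxe m n (A : 'M[F]_(m, n)) (r c : nat) : F :=
  match (insub r : option 'I_m), (insub c : option 'I_n) with
  | Some r', Some c' => A r' c'
  | _, _ => 0
  end.

Definition blockmx (a_t a_h : Q0 Q) (A : 'M[F]_(alpha a_t, alpha a_h)) : 'M[F]_totdim :=
  \matrix_(r, c)
    let x : vidx := enum_val r in let y : vidx := enum_val c in
    if (tag x == a_t) && (tag y == a_h) then mxe A (tagged x) (tagged y) else 0.

Definition arrmx (M : rep) (a : Q1 Q) : 'M[F]_totdim := blockmx (M a).

Definition vidmx (v : Q0 Q) : 'M[F]_totdim :=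
  \matrix_(r, c) (if (r == c) && (tag (enum_val r : vidx) == v) then 1 else 0).

(* Evaluation of a path a_1 a_2 ... a_n (h a_i = t a_{i+1}) : composite
   V_{t a_1} -> V_{h a_n}, as the product X_{a_1} ... X_{a_n}. *)
Definition evpath (A : Type) (f : A -> 'M[F]_totdim) (p : seq A) : 'M[F]_totdim :=
  foldr (fun a acc => f a *m acc) 1%:M p.

Definition linf (w : Q0 Q -> int) (g : Q0 Q -> nat) : int := \sum_i w i * (g i)%:Z.
Definition slope (sigma theta : Q0 Q -> int) (g : Q0 Q -> nat) : rat :=
  (linf sigma g)%:~R / (linf theta g)%:~R.

(* mu-semistability: for every subrepresentation L (subspaces U_i of k^{alpha_i},
   given as row spaces, with U_{ta} M_a <= U_{ha}), L <> 0 ->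
   mu(dim L) <= mu(alpha). *)
Definition semistable (sigma theta : Q0 Q -> int) (M : rep) : bool :=
  [forall U : {dffun forall i : Q0 Q, 'M[F]_(alpha i)},
     ([forall a : Q1 Q, (U (tl a) *m M a <= U (hd a))%MS]
      && [exists i : Q0 Q, \rank (U i) != 0%N])
     ==> (slope sigma theta (fun i => \rank (U i)) <= slope sigma theta alpha)].

Definition rep_ss sigma theta : {set rep} := [set M : rep | semistable sigma theta M].

Definition dimRep : nat := \sum_(a : Q1 Q) alpha (tl a) * alpha (hd a).
End Reps.

Section QP.
Variable F : finFieldType.
Variable Q : quiver.

(* A potential: a finite formal linear combination sum_k c_k w_k of cycles. *)
Definition potential := seq (F * seq (Q1 Q)).

Definition is_cycle (w : seq (Q1 Q)) : bool :=
  if w is a0 :: w' then path (fun a b => hd a == tl b) a0 w' && (hd (last a0 w') == tl a0)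
  else false.

Definition is_potential (W : potential) : bool := all (fun cw => is_cycle cw.2) W.

Definition coefW (W : potential) (w : seq (Q1 Q)) : F :=
  \sum_(cw <- W | cw.2 == w) cw.1.

(* C is a cut: W homogeneous of degree 1 for the grading deg a = [a \in C]. *)
Definition is_cut (C : {set Q1 Q}) (W : potential) : Prop :=
  forall w : seq (Q1 Q), coefW W w != 0 -> count (mem C) w = 1%N.

Definition omega (alpha : Q0 Q -> nat) (W : potential) (M : @rep F Q alpha) : F :=
  \sum_(cw <- W) cw.1 * \tr (evpath (arrmx M) cw.2).

(* cyclic derivative: d_c (a_0 ... a_{n-1}) = sum_{i : a_i = c} a_{i+1} ... a_{n-1} a_0 ... a_{i-1} *)
Definition cder (W : potential) (c : Q1 Q) : potential :=
  flatten [seq [seq (cw.1, behead (rot i cw.2)) | i <- iota 0 (size cw.2) & nth c cw.2 i == c]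
          | cw <- W].

Definition forget (C : {set Q1 Q}) (alpha : Q0 Q -> nat) (M : @rep F Q alpha)
  : @rep F (cutQ C) alpha :=
  [ffun a : Q1 (cutQ C) => M (val a)].

(* arrow matrices of a Q_C-representation, seen on arrows of Q (zero on C) *)
Definition cutarrmx (C : {set Q1 Q}) (alpha : Q0 Q -> nat) (x : @rep F (cutQ C) alpha) (a : Q1 Q)
  : 'M[F]_(totdim alpha) :=
  match (insub a : option {b : Q1 Q | b \notin C}) with
  | Some a' => arrmx x a'
  | None => 0
  end.

(* x in Rep_alpha(J(Q,W;C)) : x satisfies (d_c W)(x) = 0 for all c in C *)
Definition relJ (C : {set Q1 Q}) (W : potential) (alpha : Q0 Q -> nat) (x : @rep F (cutQ C) alpha) : bool :=
  [forall c in C,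
     @vidmx F Q alpha (hd c) *m (\sum_(cw <- cder W c) cw.1 *: evpath (cutarrmx x) cw.2) == 0].

Definition repJ_ss (C : {set Q1 Q}) (W : potential) (alpha : Q0 Q -> nat) (sigma theta : Q0 Q -> int)
  : {set @rep F (cutQ C) alpha} :=
  [set x : @rep F (cutQ C) alpha | @semistable F (cutQ C) alpha sigma theta x && @relJ C W alpha x].

Definition slope_fun (theta : Q0 Q -> int) : Prop :=
  forall g : Q0 Q -> nat, (exists i, g i != 0%N) -> 0 < linf theta g.

Definition numb (C : {set Q1 Q}) (alpha : Q0 Q -> nat) (sigma theta : Q0 Q -> int) : Prop :=
  forall M : @rep F Q alpha, semistable sigma theta M = @semistable F (cutQ C) alpha sigma theta (forget C M).

Definition phi_count (alpha : Q0 Q -> nat) (W : potential) (X : {set @rep F Q alpha}) : int :=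
  (#|[set M in X | omega W M == 0]|%:Z - #|[set M in X | omega W M == 1]|%:Z)%R.

Definition eulQ (a b : Q0 Q -> nat) : int :=
  (\sum_i (a i * b i)%:Z - \sum_(x : Q1 Q) (a (tl x) * b (hd x))%:Z)%R.
Definition eulC (C : {set Q1 Q}) (a b : Q0 Q -> nat) : nat :=
  \sum_(c in C) a (tl c) * b (hd c).
Definition eulJ (C : {set Q1 Q}) (a b : Q0 Q -> nat) : int :=
  (eulQ a b + (eulC C a b)%:Z + (eulC C b a)%:Z)%R.

Definition GLcard (alpha : Q0 Q -> nat) : nat :=
  \prod_(i : Q0 Q) #|[set A : 'M[F]_(alpha i) | A \in unitmx]|.
Definition dimGL (alpha : Q0 Q -> nat) : nat := \sum_(i : Q0 Q) alpha i ^ 2.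

(* virtual counts, in a real closed field R, with q^{1/2} = Num.sqrt q *)
Definition phi_vir (R : rcfType) (alpha : Q0 Q -> nat) (W : potential) (X : {set @rep F Q alpha}) : R :=
  Num.sqrt (#|F|%:R : R) ^ (- (dimRep alpha)%:Z) * (phi_count W X)%:~R.
Definition GL_vir (R : rcfType) (alpha : Q0 Q -> nat) : R :=
  Num.sqrt (#|F|%:R : R) ^ (- (dimGL alpha)%:Z) * (GLcard alpha)%:R.
End QP.

(* Split a representation [M] of [Q] as [(x, y)], with [x = forget C M] on [Q_C]
   and [y] the family of matrices on the cut arrows.  Since [W] is homogeneous
   of degree one in the cut, [omega (x, y) = sum_c tr (y_c (d_c W)(x))] is
   linear in [y].  A nonzero linear form on the finite space of the [y]'s takes
   the values 0 and 1 equally often (translate [y] along a vector of value 1),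
   while the zero form contributes [q ^ <alpha, alpha>_C]; and the form vanishes
   exactly when [x] satisfies the relations [d_c W] of [J(Q, W; C)], because the
   trace pairing is nondegenerate.  Numbness makes semistability of [(x, y)] a
   condition on [x] alone, so summing over [x] gives the point count; the
   virtual version only rearranges exponents of [q ^ (1/2)]. *)

From HB Require Import structures.
From mathcomp Require Import all_boot all_order all_algebra.
From mathcomp Require Import ring.
Import Order.TTheory GRing.Theory Num.Theory.
Local Open Scope ring_scope.
Set Implicit Arguments. Unset Strict Implicit. Unset Printing Implicit Defensive.

Section BlockMatrices.
Variables (F : finFieldType) (Q : quiver) (alpha : Q0 Q -> nat).
Local Notation N := (totdim alpha).
Local Notation vx := (vidx alpha).

Lemma mulmx_vidmxE (M : 'M[F]_N) v i j :
  (M *m vidmx F alpha v) i j = if tag (enum_val j : vx) == v then M i j else 0.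
Proof.
rewrite mxE (bigD1 j) //= mxE eqxx /= big1 ?addr0.
  by case: ifP => _; rewrite ?mulr1 ?mulr0.
by move=> k /negbTE kj; rewrite mxE kj mulr0.
Qed.

Lemma vidmx_mulmxE (M : 'M[F]_N) v i j :
  (vidmx F alpha v *m M) i j = if tag (enum_val i : vx) == v then M i j else 0.
Proof.
rewrite mxE (bigD1 i) //= mxE eqxx /= big1 ?addr0.
  by case: ifP => _; rewrite ?mul1r ?mul0r.
by move=> k /negbTE kj; rewrite mxE eq_sym kj mul0r.
Qed.

Lemma vidmx_idem v : vidmx F alpha v *m vidmx F alpha v = vidmx F alpha v.
Proof.
apply/matrixP=> i j; rewrite mulmx_vidmxE [in RHS]mxE.
by case: eqP => [_|ne_v]; rewrite ?mxE //; case: eqP => [->|] //=; case: eqP.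
Qed.

Lemma blockmx_vidmx t h (A : 'M[F]_(alpha t, alpha h)) :
  blockmx A *m vidmx F alpha h = blockmx A.
Proof.
apply/matrixP=> i j; rewrite mulmx_vidmxE; case: ifP => // hj.
by rewrite mxE /= hj andbF.
Qed.

Lemma mxeD m n (A B : 'M[F]_(m, n)) r c : mxe (A + B) r c = mxe A r c + mxe B r c.
Proof.
rewrite /mxe; case: (insub r : option 'I_m) => [r'|]; last by rewrite addr0.
by case: (insub c : option 'I_n) => [c'|]; rewrite ?mxE ?addr0.
Qed.

Lemma mxeZ m n a (A : 'M[F]_(m, n)) r c : mxe (a *: A) r c = a * mxe A r c.
Proof.
rewrite /mxe; case: (insub r : option 'I_m) => [r'|]; last by rewrite mulr0.
by case: (insub c : option 'I_n) => [c'|]; rewrite ?mxE ?mulr0.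
Qed.

Lemma mxeE m n (A : 'M[F]_(m, n)) r c (hr : (r < m)%N) (hc : (c < n)%N) :
  mxe A r c = A (Ordinal hr) (Ordinal hc).
Proof. by rewrite /mxe (insubT (fun i => i < m)%N hr) (insubT (fun i => i < n)%N hc). Qed.

Lemma blockmxD t h (A B : 'M[F]_(alpha t, alpha h)) :
  blockmx (A + B) = blockmx A + blockmx B.
Proof. by apply/matrixP=> i j; rewrite !mxE /=; case: ifP => _; rewrite ?mxeD ?addr0. Qed.

Lemma blockmxZ t h a (A : 'M[F]_(alpha t, alpha h)) : blockmx (a *: A) = a *: blockmx A.
Proof. by apply/matrixP=> i j; rewrite !mxE /=; case: ifP => _; rewrite ?mxeZ ?mulr0. Qed.

Lemma evpath_cat (T : Type) (f : T -> 'M[F]_N) p1 p2 :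
  evpath f (p1 ++ p2) = evpath f p1 *m evpath f p2.
Proof. by elim: p1 => [|a p IH] /=; rewrite ?mul1mx // IH mulmxA. Qed.

Lemma mxtrace_evpath_rot (T : Type) (f : T -> 'M[F]_N) i p :
  \tr (evpath f (rot i p)) = \tr (evpath f p).
Proof. by rewrite /rot evpath_cat mxtrace_mulC -evpath_cat cat_take_drop. Qed.

Lemma vidx_eq (u v : vx) : (u == v) = (tag u == tag v) && ((tagged u : nat) == tagged v).
Proof.
case: u => i p; case: v => j r /=; case: (eqVneq i j) => [e|ne] /=.
  subst j; apply/eqP/eqP => [/eqP|e]; first by rewrite eq_Tagged => /eqP /= ->.
  by apply/eqP; rewrite eq_Tagged; apply/eqP/val_inj.
by apply/negbTE; apply: contra ne => /eq_tag /= ->.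
Qed.

Definition delta_block (t h : Q0 Q) (s r : 'I_N) : 'M[F]_(alpha t, alpha h) :=
  \matrix_(i, j) (((i : nat) == tagged (enum_val r : vx))
                  && ((j : nat) == tagged (enum_val s : vx)))%:R.

Lemma blockmx_deltaE t h s r j k :
  tag (enum_val s : vx) = h -> tag (enum_val r : vx) = t ->
  blockmx (delta_block t h s r) j k = ((j == r) && (k == s))%:R.
Proof.
move=> hs hr; rewrite mxE /=.
have [tj|tj] := eqVneq (tag (enum_val j : vx)) t; last first.
  rewrite (_ : j == r = false) //.
  by apply/negbTE; apply: contra tj => /eqP ->; rewrite hr.
have [tk|tk] := eqVneq (tag (enum_val k : vx)) h; last first.
  rewrite (_ : k == s = false) ?andbF //.
  by apply/negbTE; apply: contra tk => /eqP ->; rewrite hs.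
have hj : (tagged (enum_val j : vx) < alpha t)%N by rewrite -tj ltn_ord.
have hk : (tagged (enum_val k : vx) < alpha h)%N by rewrite -tk ltn_ord.
rewrite (mxeE _ hj hk) mxE /= -(inj_eq enum_val_inj) -[k == s](inj_eq enum_val_inj).
rewrite !vidx_eq.
have -> : tag (enum_val j : vx) == tag (enum_val r : vx) by rewrite tj hr.
by have -> : tag (enum_val k : vx) == tag (enum_val s : vx) by rewrite tk hs.
Qed.

Lemma mxtrace_blockmx_delta t h s r (K : 'M[F]_N) :
  tag (enum_val s : vx) = h -> tag (enum_val r : vx) = t ->
  \tr (blockmx (delta_block t h s r) *m K) = K s r.
Proof.
move=> hs hr; rewrite /mxtrace (bigD1 r) //= big1 ?addr0.
  rewrite mxE (bigD1 s) //= big1 ?addr0; first by rewrite blockmx_deltaE // !eqxx mul1r.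
  by move=> k hk; rewrite blockmx_deltaE // eqxx (negbTE hk) mul0r.
move=> j hj; rewrite mxE big1 // => k _.
by rewrite blockmx_deltaE // (negbTE hj) mul0r.
Qed.

End BlockMatrices.

Lemma rot_nth (T : Type) (x0 : T) (w : seq T) i :
  (i < size w)%N -> rot i w = nth x0 w i :: behead (rot i w).
Proof. by move=> hi; rewrite /rot (drop_nth x0 hi). Qed.

Section CountOne.
Variables (T : Type) (x0 : T) (a : pred T) (w : seq T).
Hypothesis count_a1 : count a w = 1%N.

Lemma find_count1_lt : (find a w < size w)%N.
Proof. by rewrite -has_find has_count count_a1. Qed.

Lemma filter_iota_count1 :
  [seq i <- iota 0 (size w) | a (nth x0 w i)] = [:: find a w].
Proof.
have : size [seq i <- iota 0 (size w) | a (nth x0 w i)] = 1%N.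
  by rewrite size_filter -count_a1 -[in RHS](mkseq_nth x0 w) /mkseq count_map.
case E: [seq i <- _ | _] => [|j [|//]] // _.
have : find a w \in [seq i <- iota 0 (size w) | a (nth x0 w i)].
  by rewrite mem_filter nth_find ?has_count ?count_a1 // mem_iota find_count1_lt.
by rewrite E inE => /eqP ->.
Qed.

Lemma all_behead_rot_find : all (predC a) (behead (rot (find a w) w)).
Proof.
have : count a (rot (find a w) w) = 1%N.
  by rewrite /rot count_cat addnC -count_cat cat_take_drop.
rewrite (rot_nth x0 find_count1_lt) /= nth_find ?has_count ?count_a1 // add1n.
by move/succn_inj/eqP; rewrite -leqn0 leqNgt -has_count all_predC.
Qed.

End CountOne.

Lemma card_dep_ffun_prod (aT : finType) (rT : aT -> finType) :
  #|{dffun forall x : aT, rT x}| = (\prod_x #|rT x|)%N.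
Proof.
rewrite card_dep_ffun foldr_map -big_enum.
by elim: (enum aT) => [|x s IH]; rewrite ?big_nil ?big_cons //= IH.
Qed.

Section CutDecomposition.
Variables (F : finFieldType) (Q : quiver) (C : {set Q1 Q}) (alpha : Q0 Q -> nat).
Local Notation rep_cut := (@rep F (cutQ C) alpha).

Definition cut_arrow := {c : Q1 Q | c \in C}.

Definition cut_part :=
  {dffun forall c : cut_arrow, 'M[F]_(alpha (tl (val c)), alpha (hd (val c)))}.

Definition glue_at (x : rep_cut) (y : cut_part) (a : Q1 Q) :
    'M[F]_(alpha (tl a), alpha (hd a)) :=
  (if a \in C as b return (a \in C) = b -> _
   then fun h => y (exist _ a h) else fun h => x (exist _ a (negbT h))) (erefl (a \in C)).

Lemma glue_at_cut x y a (h : a \in C) : glue_at x y a = y (exist _ a h).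
Proof.
rewrite /glue_at; move: (erefl (a \in C)); case: {2 3}(a \in C) => e.
  by rewrite (bool_irrelevance e h).
by exfalso; move: h; rewrite e.
Qed.

Lemma glue_at_uncut x y a (h : a \notin C) : glue_at x y a = x (exist _ a h).
Proof.
rewrite /glue_at; move: (erefl (a \in C)); case: {2 3}(a \in C) => e.
  by exfalso; move: h; rewrite e.
by rewrite (bool_irrelevance (negbT e) h).
Qed.

Definition glue (x : rep_cut) (y : cut_part) : rep F alpha := [ffun a => glue_at x y a].
Definition cut_part_of (M : rep F alpha) : cut_part := [ffun c => M (val c)].

Lemma forget_glue x y : forget C (glue x y) = x.
Proof. by apply/ffunP => -[a h]; rewrite !ffunE glue_at_uncut. Qed.

Lemma cut_part_of_glue x y : cut_part_of (glue x y) = y.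
Proof. by apply/ffunP => -[a h]; rewrite !ffunE /= glue_at_cut. Qed.

Lemma glue_forget M : glue (forget C M) (cut_part_of M) = M.
Proof.
apply/ffunP => a; rewrite ffunE; case: (boolP (a \in C)) => h.
  by rewrite glue_at_cut ffunE.
by rewrite glue_at_uncut ffunE.
Qed.

Lemma card_cut_part : #|{: cut_part}| = (#|F| ^ eulC C alpha alpha)%N.
Proof.
rewrite card_dep_ffun_prod /eulC expn_sum.
rewrite (big_sub (mem C) (fun c => #|F| ^ (alpha (tl c) * alpha (hd c))))%N /=.
by apply: eq_bigr => c _; rewrite card_mx.
Qed.

Lemma card_set_glue (P : pred (rep F alpha)) :
  #|[set M | P M]| = (\sum_(x : rep_cut) #|[set y : cut_part | P (glue x y)]|)%N.
Proof.
rewrite -sum1_card (reindex (fun p : rep_cut * cut_part => glue p.1 p.2)) /=; last first.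
  exists (fun M => (forget C M, cut_part_of M)) => [[x y] _|M _] /=.
    by rewrite forget_glue cut_part_of_glue.
  exact: glue_forget.
under [RHS]eq_bigr do rewrite -sum1_card.
by rewrite pair_big_dep; apply: eq_bigl => -[x y]; rewrite !inE.
Qed.

End CutDecomposition.

Section PotentialSums.
Variables (F : finFieldType) (Q : quiver) (W : potential F Q).

Lemma sum_potential_coefW (f : seq (Q1 Q) -> F) :
  \sum_(cw <- W) cw.1 * f cw.2 = \sum_(w <- undup [seq cw.2 | cw <- W]) coefW W w * f w.
Proof.
have single cw : cw \in W ->
    cw.1 * f cw.2 = \sum_(w <- undup [seq cw.2 | cw <- W] | w == cw.2) cw.1 * f cw.2.
  move=> Wcw; rewrite -big_filter filter_pred1_uniq ?undup_uniq ?big_seq1 //.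
  by rewrite mem_undup map_f.
rewrite (eq_big_seq _ single) (exchange_big_dep xpredT) //=.
apply: eq_bigr => w _; rewrite /coefW big_distrl /=.
by apply: eq_big => [cw|cw /eqP ->] //; apply: eq_sym.
Qed.

Lemma eq_sum_potential (f g : seq (Q1 Q) -> F) :
  (forall w, coefW W w != 0 -> f w = g w) ->
  \sum_(cw <- W) cw.1 * f cw.2 = \sum_(cw <- W) cw.1 * g cw.2.
Proof.
move=> fg; rewrite !sum_potential_coefW; apply: eq_bigr => w _.
by have [->|/fg ->] := eqVneq (coefW W w) 0; rewrite ?mul0r.
Qed.

End PotentialSums.

Section OmegaOnFibres.
Variables (F : finFieldType) (Q : quiver) (C : {set Q1 Q}) (W : potential F Q).
Variable alpha : Q0 Q -> nat.
Local Notation rep_cut := (@rep F (cutQ C) alpha).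

Definition cder_ev (x : rep_cut) (c : Q1 Q) : 'M[F]_(totdim alpha) :=
  \sum_(cw <- cder W c) cw.1 *: evpath (cutarrmx x) cw.2.

Definition omega_fibre (x : rep_cut) (y : cut_part F C alpha) : F :=
  \sum_(c : cut_arrow C) \tr (@blockmx F Q alpha _ _ (y c) *m cder_ev x (val c)).

Lemma sum_cut_occurrences (T : Q1 Q -> nat -> F) a0 w :
  \sum_(c : cut_arrow C) \sum_(i <- iota 0 (size w) | nth (val c) w i == val c) T (val c) i
  = \sum_(i <- iota 0 (size w) | nth a0 w i \in C) T (nth a0 w i) i.
Proof.
rewrite -(big_sub (mem C) (fun a => \sum_(i <- _ | nth a w i == a) T a i)) /=.
under eq_bigr do rewrite big_mkcond /=.
rewrite exchange_big /= [RHS]big_mkcond /= !big_seq; apply: eq_bigr => i.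
rewrite mem_iota => /andP[_ lt_i_w].
under eq_bigr do rewrite (set_nth_default a0 _ lt_i_w).
rewrite -big_mkcondr /=; have [inC|notinC] := boolP (nth a0 w i \in C).
  apply: big_pred1 => a /=; rewrite eq_sym andb_idl // => /eqP ->; exact: inC.
by rewrite big_pred0 // => a; apply: contraNF notinC => /andP[aC /eqP ->].
Qed.

Variables (x : rep_cut) (y : cut_part F C alpha).
Local Notation M := (glue x y).

Lemma cutarrmx_glue a : a \notin C -> cutarrmx x a = arrmx M a.
Proof.
move=> aC; rewrite /cutarrmx; case: insubP => [[b bC] _ /= eab|]; last by rewrite aC.
by subst b; rewrite /arrmx ffunE glue_at_uncut.
Qed.

Lemma evpath_cutarrmx_glue p :
  all (predC (mem C)) p -> evpath (cutarrmx x) p = evpath (arrmx M) p.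
Proof. by elim: p => [|a p IH] //= /andP[aC pC]; rewrite IH // cutarrmx_glue. Qed.

Lemma blockmx_cut_part (c : cut_arrow C) : @blockmx F Q alpha _ _ (y c) = arrmx M (val c).
Proof. by case: c => a aC; rewrite /arrmx ffunE glue_at_cut. Qed.

Definition cder_pairing (w : seq (Q1 Q)) : F :=
  \sum_(c : cut_arrow C) \sum_(i <- iota 0 (size w) | nth (val c) w i == val c)
     \tr (arrmx M (val c) *m evpath (cutarrmx x) (behead (rot i w))).

(* Rotating [w] to its unique cut arrow preserves the trace and leaves a path of [Q_C]. *)
Lemma cder_pairing_count1 w :
  count (mem C) w = 1%N -> cder_pairing w = \tr (evpath (arrmx M) w).
Proof.
case: w => [//|a0 w'] cnt1; set w := a0 :: w' in cnt1 *.
pose T a i := \tr (arrmx M a *m evpath (cutarrmx x) (behead (rot i w))).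
rewrite /cder_pairing (sum_cut_occurrences T a0) -big_filter.
rewrite (filter_iota_count1 a0 cnt1) big_seq1.
have tailC := all_behead_rot_find a0 cnt1; have lt_i0_w := find_count1_lt cnt1.
set i0 := find (mem C) w in tailC lt_i0_w *.
rewrite /T -(mxtrace_evpath_rot _ i0) [in RHS](rot_nth a0 lt_i0_w) /=.
by rewrite evpath_cutarrmx_glue.
Qed.

Lemma omega_fibre_cder_pairing : omega_fibre x y = \sum_(cw <- W) cw.1 * cder_pairing cw.2.
Proof.
rewrite /omega_fibre.
under eq_bigr do
  rewrite blockmx_cut_part /cder_ev mulmx_sumr linear_sum /cder big_flatten /= big_map.
rewrite exchange_big /=; apply: eq_bigr => cw _.
rewrite /cder_pairing mulr_sumr; apply: eq_bigr => c _.
rewrite big_map big_filter mulr_sumr; apply: eq_bigr => i _.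
by rewrite -scalemxAr mxtraceZ.
Qed.

Lemma omega_glue : is_cut C W -> omega W M = omega_fibre x y.
Proof.
move=> cutW; rewrite omega_fibre_cder_pairing /omega.
apply: (eq_sum_potential (f := fun w => \tr (evpath (arrmx M) w))).
by move=> w /cutW /cder_pairing_count1 ->.
Qed.

End OmegaOnFibres.

Section RelationsOfJ.
Variables (F : finFieldType) (Q : quiver) (C : {set Q1 Q}) (W : potential F Q).
Variables (alpha : Q0 Q -> nat) (x : @rep F (cutQ C) alpha).

Lemma cutarrmx_vidmx b : cutarrmx x b *m vidmx F alpha (hd b) = cutarrmx x b.
Proof.
rewrite /cutarrmx; case: insubP => [b' _ eb|_]; last by rewrite mul0mx.
by rewrite /arrmx -eb blockmx_vidmx.
Qed.

Lemma evpath_vidmx_last b p :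
  evpath (cutarrmx x) (b :: p) *m vidmx F alpha (hd (last b p))
  = evpath (cutarrmx x) (b :: p).
Proof.
elim: p b => [|b' p IH] b /=; first by rewrite mulmx1 cutarrmx_vidmx.
by rewrite -mulmxA; have /= -> := IH b'.
Qed.

Lemma is_cycleE w : is_cycle w = (w != [::]) && cycle (fun a b : Q1 Q => hd a == tl b) w.
Proof. by case: w => [//|a w] /=; rewrite rcons_path. Qed.

Lemma vidmx_evpath_rot c w i :
  is_cycle w -> (i < size w)%N -> nth c w i = c ->
  vidmx F alpha (hd c) *m evpath (cutarrmx x) (behead (rot i w)) *m vidmx F alpha (tl c)
  = vidmx F alpha (hd c) *m evpath (cutarrmx x) (behead (rot i w)).
Proof.
rewrite is_cycleE => /andP[_ cyc_w] lt_i_w w_i.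
move: cyc_w; rewrite -(rot_cycle i) (rot_nth c lt_i_w) w_i.
move: (behead (rot i w)) => p /=; rewrite rcons_path => /andP[_ /eqP last_p].
case: p last_p => [|b p] /= last_p.
  by rewrite mulmx1 last_p vidmx_idem.
by rewrite -mulmxA -last_p evpath_vidmx_last.
Qed.

(* Every term of the cyclic derivative of a cycle at [c] is a path from [hd c]
   back to [tl c]. *)
Lemma vidmx_cder_ev c : is_potential W ->
  vidmx F alpha (hd c) *m cder_ev W x c *m vidmx F alpha (tl c)
  = vidmx F alpha (hd c) *m cder_ev W x c.
Proof.
move=> potW; rewrite /cder_ev !mulmx_sumr mulmx_suml big_seq [RHS]big_seq.
apply: eq_bigr => cw /flattenP[s /mapP[[a w] Waw ->] /mapP[i]].
rewrite mem_filter mem_iota /= add0n => /andP[/eqP w_i lt_i_w] ->.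
by rewrite /= -!scalemxAr -scalemxAl vidmx_evpath_rot // (allP potW _ Waw).
Qed.

Lemma relJ_omega_fibre : relJ W x -> forall y, omega_fibre W x y = 0.
Proof.
move/forallP=> relx y; rewrite /omega_fibre big1 // => -[c cC] _ /=.
have /eqP relc := implyP (relx c) cC.
by rewrite -(blockmx_vidmx (y (exist _ c cC))) -mulmxA relc mulmx0 mxtrace0.
Qed.

(* Pairing against a matrix unit reads off one entry of [cder_ev W x c], and
   the nonzero entries of the [hd c]-rows lie in the [tl c]-columns. *)
Lemma not_relJ_witness : is_potential W -> ~~ relJ W x ->
  exists c0 : cut_arrow C, exists Y0 : 'M[F]_(alpha (tl (val c0)), alpha (hd (val c0))),
    \tr (blockmx Y0 *m cder_ev W x (val c0)) != 0.
Proof.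
move=> potW; rewrite /relJ negb_forall => /existsP[c]; rewrite negb_imply => /andP[cC].
set K := vidmx F alpha (hd c) *m _ => K_neq0.
have : ~~ [forall s, forall r, K s r == 0].
  apply: contra K_neq0 => /forallP K0; apply/eqP/matrixP => s r.
  by rewrite [RHS]mxE; move/forallP: (K0 s) => /(_ r) /eqP.
rewrite negb_forall => /existsP[s]; rewrite negb_forall => /existsP[r Ksr].
have hs : tag (enum_val s : vidx alpha) = hd c.
  by apply/eqP; apply: contraNT Ksr => ne; rewrite /K vidmx_mulmxE (negbTE ne).
have hr : tag (enum_val r : vidx alpha) = tl c.
  apply/eqP; apply: contraNT Ksr => ne.
  by rewrite /K -(vidmx_cder_ev c potW) mulmx_vidmxE (negbTE ne).
exists (exist _ c cC), (delta_block F (tl c) (hd c) s r) => /=.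
by rewrite -(blockmx_vidmx (delta_block F _ _ s r)) -mulmxA mxtrace_blockmx_delta.
Qed.

End RelationsOfJ.

Lemma card_preim_shift (T : finType) (V : zmodType) (f : T -> V) (sh : T -> T) d k :
  injective sh -> (forall t, f (sh t) = f t + d) ->
  #|[set t | f t == k + d]| = #|[set t | f t == k]|.
Proof.
move=> inj_sh f_sh; rewrite -(card_preimset _ inj_sh); apply: eq_card => t.
by rewrite !inE f_sh (inj_eq (addIr d)).
Qed.

Section FibreCount.
Variables (F : finFieldType) (Q : quiver) (C : {set Q1 Q}) (W : potential F Q).
Variables (alpha : Q0 Q -> nat) (x : @rep F (cutQ C) alpha).

Lemma card_omega_fibre : is_potential W ->
  #|[set y | omega_fibre W x y == 0]|%:Z - #|[set y | omega_fibre W x y == 1]|%:Z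
  = if relJ W x then (#|F| ^ eulC C alpha alpha)%N%:Z else 0.
Proof.
move=> potW; case: ifP => [relx|/negbT not_relx].
  have fibre0 : [set y | omega_fibre W x y == 0] = setT.
    by apply/setP => y; rewrite !inE relJ_omega_fibre ?eqxx.
  have fibre1 : [set y | omega_fibre W x y == 1] = set0.
    by apply/setP => y; rewrite !inE relJ_omega_fibre // eq_sym oner_eq0.
  by rewrite fibre0 fibre1 cardsT card_cut_part cards0 subr0.
have [c0 [Y0 t_neq0]] := not_relJ_witness potW not_relx.
set t := \tr _ in t_neq0.
pose shift (y : cut_part F C alpha) : cut_part F C alpha :=
  [ffun c => dfwith (fun c => y c) (y c0 + t^-1 *: Y0) c].
have omega_shift y : omega_fibre W x (shift y) = omega_fibre W x y + 1.
  rewrite /omega_fibre (bigD1 c0) //= [in RHS](bigD1 c0) //= addrAC; congr (_ + _).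
    rewrite ffunE dfwith_in blockmxD blockmxZ mulmxDl mxtraceD -scalemxAl mxtraceZ.
    by rewrite -/t mulVf.
  by apply: eq_bigr => c c_neq0; rewrite ffunE dfwith_out // eq_sym.
have inj_shift : injective shift.
  move=> y1 y2 /ffunP eq_y; apply/ffunP => c; move: (eq_y c); rewrite !ffunE.
  have [<-|ne] := eqVneq c0 c; last by rewrite !dfwith_out.
  by rewrite !dfwith_in => /addIr.
by rewrite -[1]add0r (card_preim_shift 0 inj_shift omega_shift) subrr.
Qed.

End FibreCount.

Section PhiCount.
Variables (F : finFieldType) (Q : quiver) (C : {set Q1 Q}) (W : potential F Q).
Variables (alpha : Q0 Q -> nat) (sigma theta : Q0 Q -> int).
Hypotheses (potW : is_potential W) (cutW : is_cut C W) (numbC : numb F C alpha sigma theta).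

Lemma card_rep_ss_omega k :
  #|[set M in rep_ss F alpha sigma theta | omega W M == k]| =
  (\sum_(x : @rep F (cutQ C) alpha)
     if @semistable F (cutQ C) alpha sigma theta x
     then #|[set y | omega_fibre W x y == k]| else 0)%N.
Proof.
rewrite (card_set_glue C); apply: eq_bigr => x _.
case: ifP => ss_x.
  by apply: eq_card => y; rewrite !inE numbC forget_glue ss_x omega_glue.
apply/eqP; rewrite cards_eq0; apply/eqP/setP => y.
by rewrite !inE numbC forget_glue ss_x.
Qed.

Lemma phi_count_rep_ss :
  phi_count W (rep_ss F alpha sigma theta)
  = ((#|F| ^ eulC C alpha alpha * #|repJ_ss C W alpha sigma theta|)%N)%:Z.
Proof.
rewrite /phi_count !card_rep_ss_omega !(raddf_sum Posz) -sumrB.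
rewrite -sum1_card big_distrr (raddf_sum Posz) [RHS]big_mkcond /=.
apply: eq_bigr => x _.
rewrite inE; case: ifP => ss_x /=; last by rewrite subrr.
by rewrite card_omega_fibre //; case: ifP; rewrite ?muln1.
Qed.

End PhiCount.

Lemma eulJ_diag (Q : quiver) (C : {set Q1 Q}) (alpha : Q0 Q -> nat) :
  eulJ C alpha alpha
  = (dimGL alpha)%:Z - (dimRep alpha)%:Z + (eulC C alpha alpha)%:Z + (eulC C alpha alpha)%:Z.
Proof.
rewrite /eulJ /eulQ /dimGL /dimRep !(raddf_sum Posz).
by congr (_ - _ + _ + _); apply: eq_bigr => i _; rewrite mulnn.
Qed.

Lemma GLcard_gt0 (F : finFieldType) (Q : quiver) (alpha : Q0 Q -> nat) :
  (0 < GLcard F alpha)%N.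
Proof.
by rewrite prodn_gt0 // => i; apply/card_gt0P; exists 1%:M; rewrite inE unitmx1.
Qed.

Lemma sqrt_pow_ratio (R : rcfType) (q e J G dR dG : nat) :
  (0 < q)%N -> (0 < G)%N ->
  (Num.sqrt (q%:R : R) ^ (- dR%:Z) * (q ^ e * J)%N%:R)
    / (Num.sqrt (q%:R : R) ^ (- dG%:Z) * G%:R)
  = Num.sqrt (q%:R : R) ^ ((dG%:Z - dR%:Z) + e%:Z + e%:Z) * (J%:R / G%:R).
Proof.
move=> q_gt0 G_gt0; set s := Num.sqrt (q%:R : R).
have s_neq0 : s != 0 by rewrite sqrtr_eq0 -ltNge ltr0n.
have G_neq0 : (G%:R : R) != 0 by rewrite pnatr_eq0 -lt0n.
rewrite !expfzDr // -!exprnN -!exprnP natrM natrX.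
have -> : (q%:R : R) = s ^+ 2 by rewrite sqr_sqrtr // ler0n.
rewrite -exprM mul2n -addnn exprD.
have s_pow_neq0 n : s ^+ n != 0 by rewrite expf_neq0.
by field; rewrite G_neq0 !s_pow_neq0.
Qed.

Unset Implicit Arguments.

Theorem lemmaL (F : finFieldType) (Q : quiver) (W : potential F Q) (C : {set Q1 Q})
  (alpha : Q0 Q -> nat) (sigma theta : Q0 Q -> int) (R : rcfType) :
  is_potential W -> is_cut C W -> slope_fun theta -> numb F C alpha sigma theta ->
  phi_count W (rep_ss F alpha sigma theta)
    = ((#|F| ^ eulC C alpha alpha * #|repJ_ss C W alpha sigma theta|)%N)%:Z
  /\
  phi_vir R W (rep_ss F alpha sigma theta) / GL_vir F R alpha
    = Num.sqrt (#|F|%:R : R) ^ (eulJ C alpha alpha)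
      * (#|repJ_ss C W alpha sigma theta|%:R / (GLcard F alpha)%:R).
Proof.
move=> potW cutW _ numbC; have phiE := phi_count_rep_ss potW cutW numbC.
split=> //; rewrite eulJ_diag /phi_vir /GL_vir phiE.
by apply: sqrt_pow_ratio; [apply/card_gt0P; exists 0 | exact: GLcard_gt0].
Qed.
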